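(* Let $A\subseteq\mathbb{N}$ be an essential $\mathcal{CR}$-set in $(\mathbb{N},+)$ and let $l\in\mathbb{N}$. Then the set $$\{(a,b)\in\mathbb{N}\times\mathbb{N}:\ \{a,a+b,a+2b,\ldots,a+lb\}\subseteq A\}$$ is an essential $\mathcal{CR}$-set in $(\mathbb{N}\times\mathbb{N},+)$ (with coordinatewise addition).
   Context: For a commutative semigroup $(S,+)$ and $r,n\in\mathbb{N}$, let $S^{r\times n}$ denote the set of $r\times n$ matrices with entries in $S$; for $M=(M_{ij})\in S^{r\times n}$ and non-empty $\alpha\subseteq\{1,\ldots,r\}$ write $M_{\alpha j}=\sum_{i\in\alpha}M_{ij}$. A subset $A\subseteq S$ is a $\mathcal{CR}$-set if for every $n\in\mathbb{N}$ there exists $r\in\mathbb{N}$ such that for every $M\in S^{r\times n}$ there exist a non-empty $\alpha\subseteq\{1,\ldots,r\}$ and $s\in S$ with $s+M_{\alpha j}\in A$ for all $j\in\{1,\ldots,n\}$. Let $\beta S$ be the Stone–Čech compactification of the discrete semigroup $S$, viewed as the set of ultrafilters on $S$, with the extended operation given by: for $p,q\in\beta S$ and $B\subseteq S$, $B\in p+q$ iff $\{x\in S:-x+B\in q\}\in p$, where $-x+B=\{y\in S:x+y\in B\}$. Let $\beta(\mathcal{CR})=\{p\in\beta S:\text{every member of }p\text{ is a }\mathcal{CR}\text{-set}\}$; this is a closed subsemigroup of $\beta S$. A set $A\subseteq S$ is an essential $\mathcal{CR}$-set if $A\in p$ for some idempotent $p=p+p$ in $\beta(\mathcal{CR})$.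 *)

From mathcomp Require Import all_boot.
From Stdlib Require Import PArith.
Set Implicit Arguments. Unset Strict Implicit. Unset Printing Implicit Defensive.

Section Semigroup.
Variables (S : Type) (add : S -> S -> S).

(* Sum over a non-empty finite set alpha of row indices of f i, for a
   commutative semigroup (no neutral element): f i0 + f i1 + ... + f ik where
   enum alpha = [:: i0; ...; ik].  The default d is only used when alpha is
   empty, which never happens in the definitions below. *)
Definition alpha_sum (r : nat) (d : S) (f : 'I_r -> S) (alpha : {set 'I_r}) : S :=
  match enum alpha with
  | [::] => d
  | i :: t => foldl (fun acc k => add acc (f k)) (f i) t
  end.

Definition CR_set (A : S -> Prop) : Prop :=
  forall n : nat, exists r : nat, forall M : 'I_r -> 'I_n -> S,
    exists (alpha : {set 'I_r}) (s : S),
      alpha != set0 /\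
      forall j : 'I_n, A (add s (alpha_sum s (fun i => M i j) alpha)).

Definition ultrafilter (p : (S -> Prop) -> Prop) : Prop :=
  [/\ p (fun _ => True),
      ~ p (fun _ => False),
      (forall B C : S -> Prop, p B -> (forall x, B x -> C x) -> p C),
      (forall B C : S -> Prop, p B -> p C -> p (fun x => B x /\ C x))
    & (forall B : S -> Prop, p B \/ p (fun x => ~ B x))].

Definition ultra_add (p q : (S -> Prop) -> Prop) : (S -> Prop) -> Prop :=
  fun B => p (fun x => q (fun y => B (add x y))).

Definition ultra_idempotent (p : (S -> Prop) -> Prop) : Prop :=
  forall B : S -> Prop, ultra_add p p B <-> p B.

Definition in_beta_CR (p : (S -> Prop) -> Prop) : Prop :=
  ultrafilter p /\ forall B : S -> Prop, p B -> CR_set B.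

Definition essential_CR_set (A : S -> Prop) : Prop :=
  exists p : (S -> Prop) -> Prop,
    [/\ in_beta_CR p, ultra_idempotent p & p A].

End Semigroup.

Definition pos_pair_add (x y : positive * positive) : positive * positive :=
  ((x.1 + y.1)%positive, (x.2 + y.2)%positive).

From mathcomp Require Import all_boot.
From Stdlib Require Import PArith Lia.
From Stdlib Require List.
From mathcomp Require Import zify.
From mathcomp Require boolp classical_sets filter.
Set Implicit Arguments. Unset Strict Implicit. Unset Printing Implicit Defensive.

(* Fix an idempotent p of beta(CR) containing A.  The ultrafilters on N x N
   containing every set whose complement is not a CR-set, and every set that
   contains some AP(B) = {(a, b) | a, a + b, ..., a + l b in B} with B in p, form
   a closed subsemigroup of beta(N x N).  It is nonempty because AP(B) is a CR-set
   when B is one and CR-sets of N x N are partition regular (a consequence of the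
   Hales-Jewett theorem); it is closed under + because p + p = p.  By the
   Ellis-Numakura lemma it contains an idempotent, which lies in beta(CR) and
   contains AP(A). *)

Section HalesJewett.

Definition line_point N K (lam : {ffun 'I_N -> option 'I_K}) (x : 'I_K) :
  {ffun 'I_N -> 'I_K} := [ffun i => odflt x (lam i)].

Definition is_line N K (lam : {ffun 'I_N -> option 'I_K}) := exists i, lam i = None.

Definition monochromatic_line N K (C : Type) (chi : {ffun 'I_N -> 'I_K} -> C) :=
  exists2 lam, is_line lam &
    forall x y, chi (line_point lam x) = chi (line_point lam y).

Definition cat_word (T : Type) m n (a : {ffun 'I_m -> T}) (b : {ffun 'I_n -> T}) :
  {ffun 'I_(m + n) -> T} :=
  [ffun i => match split i with inl j => a j | inr j => b j end].

Definition word_line N K (a : {ffun 'I_N -> 'I_K}) : {ffun 'I_N -> option 'I_K} :=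
  [ffun i => Some (a i)].

Lemma line_point_cat m n K (mu : {ffun 'I_m -> option 'I_K})
    (nu : {ffun 'I_n -> option 'I_K}) x :
  line_point (cat_word mu nu) x = cat_word (line_point mu x) (line_point nu x).
Proof. by apply/ffunP => i; rewrite !ffunE; case: (split i) => j; rewrite !ffunE. Qed.

Lemma line_point_word N K (a : {ffun 'I_N -> 'I_K}) x : line_point (word_line a) x = a.
Proof. by apply/ffunP => i; rewrite !ffunE. Qed.

Lemma is_line_catl m n K (mu : {ffun 'I_m -> option 'I_K})
    (nu : {ffun 'I_n -> option 'I_K}) :
  is_line mu -> is_line (cat_word mu nu).
Proof. by case=> j hj; exists (lshift n j); rewrite ffunE (unsplitK (inl j)). Qed.

Lemma is_line_catr m n K (mu : {ffun 'I_m -> option 'I_K})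
    (nu : {ffun 'I_n -> option 'I_K}) :
  is_line nu -> is_line (cat_word mu nu).
Proof. by case=> j hj; exists (rshift m j); rewrite ffunE (unsplitK (inr j)). Qed.

Lemma monochromatic_line_catr m n K (C : Type) (chi : {ffun 'I_(m + n) -> 'I_K} -> C) a :
  monochromatic_line (fun b => chi (cat_word a b)) -> monochromatic_line chi.
Proof.
case=> nu lnu mono; exists (cat_word (word_line a) nu); first exact: is_line_catr.
by move=> x y; rewrite !line_point_cat !line_point_word.
Qed.

Lemma monochromatic_line_alphabet1 N (C : Type) (chi : {ffun 'I_N.+1 -> 'I_1} -> C) :
  monochromatic_line chi.
Proof.
exists [ffun _ => None]; first by exists ord0; rewrite ffunE.
by move=> x y; rewrite (ord1 x) (ord1 y).
Qed.

Variables (k : nat) (C : finType).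
Implicit Types (N : nat) (s : nat).

Definition focused_lines N (chi : {ffun 'I_N -> 'I_k.+2} -> C) s
    (lam : nat -> {ffun 'I_N -> option 'I_k.+2}) (f : {ffun 'I_N -> 'I_k.+2}) :=
  (forall i, i < s -> [/\ is_line (lam i), line_point (lam i) ord_max = f &
     forall x y, x != ord_max -> y != ord_max ->
       chi (line_point (lam i) x) = chi (line_point (lam i) y)]) /\
  (forall i j, i < s -> j < s ->
     chi (line_point (lam i) ord0) = chi (line_point (lam j) ord0) -> i = j).

Lemma focused_monochromatic N (chi : {ffun 'I_N -> 'I_k.+2} -> C) s lam f i :
  focused_lines chi s lam f -> i < s ->
  chi f = chi (line_point (lam i) ord0) -> monochromatic_line chi.
Proof.
move=> [focus _] lt_is chif; have [li lif mono] := focus i lt_is.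
have col x : chi (line_point (lam i) x) = chi (line_point (lam i) ord0).
  have [->|xN] := eqVneq x ord_max; first by rewrite lif.
  by apply: mono; rewrite // -(inj_eq val_inj).
by exists (lam i) => // x y; rewrite !col.
Qed.

Lemma focused_lines_cat m n (chi : {ffun 'I_(m + n) -> 'I_k.+2} -> C)
    (mu : {ffun 'I_m -> option 'I_k.+2}) s lam f :
  is_line mu ->
  (forall x y b, x != ord_max -> y != ord_max ->
     chi (cat_word (line_point mu x) b) = chi (cat_word (line_point mu y) b)) ->
  focused_lines (fun b => chi (cat_word (line_point mu ord0) b)) s lam f ->
  monochromatic_line chi \/ exists lam' f', focused_lines chi s.+1 lam' f'.
Proof.
set a0 := line_point mu ord0; set chi' := fun b => chi (cat_word a0 b).
move=> lmu mono_mu foc.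
have [/existsP[i /eqP chif] | fresh] :=
  boolP [exists i : 'I_s, chi' f == chi' (line_point (lam i) ord0)].
  left; apply: (@monochromatic_line_catr _ _ _ _ _ a0).
  exact: (focused_monochromatic foc (ltn_ord i) chif).
have {}fresh i : i < s -> chi' f != chi' (line_point (lam i) ord0).
  by move=> lt_is; apply: contraNN fresh => e; apply/existsP; exists (Ordinal lt_is).
have o0 : (ord0 : 'I_k.+2) != ord_max by rewrite -(inj_eq val_inj).
have [focus inj] := foc; right.
exists (fun i => cat_word mu (if i < s then lam i else word_line f)).
exists (cat_word (line_point mu ord_max) f).
have col0 i : chi (line_point (cat_word mu (if i < s then lam i else word_line f)) ord0)
    = if i < s then chi' (line_point (lam i) ord0) else chi' f.
  by case: ifP; rewrite line_point_cat ?line_point_word.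
split=> [i|i j].
  rewrite ltnS leq_eqVlt => /orP[/eqP ->|lt_is]; rewrite ?ltnn ?lt_is.
    split; first exact: is_line_catl.
      by rewrite line_point_cat line_point_word.
    by move=> x y xN yN; rewrite !line_point_cat !line_point_word
      (mono_mu x ord0) // (mono_mu y ord0).
  have [li lif mono] := focus i lt_is; split; first exact: is_line_catl.
    by rewrite line_point_cat lif.
  move=> x y xN yN; rewrite !line_point_cat (mono_mu x ord0) // (mono_mu y ord0) //.
  exact: mono.
rewrite ltnS leq_eqVlt => /orP[/eqP ->|lt_is];
  rewrite ltnS leq_eqVlt => /orP[/eqP ->|lt_js]; rewrite !col0 ?ltnn ?lt_is ?lt_js //.
- by move=> e; move: (fresh j lt_js); rewrite e eqxx.
- by move=> e; move: (fresh i lt_is); rewrite e eqxx.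
- exact: inj.
Qed.

End HalesJewett.

Definition hales_jewett_at k r N := forall (C : finType) (chi : {ffun 'I_N -> 'I_k.+1} -> C),
  #|C| <= r -> monochromatic_line chi.

Definition focusing_at k r s N := forall (C : finType) (chi : {ffun 'I_N -> 'I_k.+2} -> C),
  #|C| <= r -> monochromatic_line chi \/ exists lam f, focused_lines chi s lam f.

Lemma focusing0 k r : focusing_at k r 0 0.
Proof. by move=> C chi _; right; exists (fun _ => [ffun _ => None]), [ffun _ => ord0]. Qed.

Lemma focusingS k r s N : (forall r', exists m, hales_jewett_at k r' m) ->
  focusing_at k r s N -> exists N', focusing_at k r s.+1 N'.
Proof.
move=> HJk focusN.
pose W := {ffun 'I_N -> 'I_k.+2}.
have [m HJm] := HJk (r ^ #|{: W}|).
exists (m + N) => C chi card_C.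
pose liftw (a : {ffun 'I_m -> 'I_k.+1}) : {ffun 'I_m -> 'I_k.+2} :=
  [ffun i => lift ord_max (a i)].
(* Colour a word a of length m by the colouring b |-> chi (a b) it induces on
   its extensions; a line for the k + 1 lower letters then makes chi blind to
   which lower letter fills it. *)
pose chi1 a : {ffun W -> C} := [ffun b => chi (cat_word (liftw a) b)].
have [mu lmu mono_mu] : monochromatic_line chi1.
  have W_gt0 : 0 < #|{: W}| by apply/card_gt0P; exists [ffun=> ord0].
  by apply: HJm; rewrite card_ffun leq_exp2r.
pose mu' : {ffun 'I_m -> option 'I_k.+2} := [ffun i => omap (lift ord_max) (mu i)].
have lmu' : is_line mu' by case: lmu => j hj; exists j; rewrite ffunE hj.
have mono_mu' x y b : x != ord_max -> y != ord_max ->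
    chi (cat_word (line_point mu' x) b) = chi (cat_word (line_point mu' y) b).
  have lift_point x' : line_point mu' (lift ord_max x') = liftw (line_point mu x').
    by apply/ffunP => i; rewrite !ffunE; case: (mu i).
  case: (unliftP ord_max x) => [x' ->|->]; last by rewrite eqxx.
  case: (unliftP ord_max y) => [y' ->|->]; last by rewrite eqxx.
  by move=> _ _; rewrite !lift_point; move/ffunP/(_ b): (mono_mu x' y'); rewrite !ffunE.
have [mono|[lam [f foc]]] :=
  focusN C (fun b => chi (cat_word (line_point mu' ord0) b)) card_C.
  by left; apply: monochromatic_line_catr mono.
exact: focused_lines_cat foc.
Qed.

Lemma hales_jewett_succ k : (forall r, exists N, hales_jewett_at k r N) ->
  forall r, exists N, hales_jewett_at k.+1 r N.
Proof.
move=> HJk r.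
have [N focusN] : exists N, focusing_at k r r N.
  elim: {2}r => [|s [N focusN]]; first by exists 0; apply: focusing0.
  exact: focusingS focusN.
exists N => C chi card_C.
have [//|[lam [f foc]]] := focusN C chi card_C.
(* Pigeonhole: the r focused lines already use r distinct colours. *)
pose g (i : 'I_r) := chi (line_point (lam i) ord0).
have g_inj : injective g by move=> i j /(foc.2 i j (ltn_ord i) (ltn_ord j)) /val_inj.
have /codomP [i chif] : chi f \in codom g.
  by apply: inj_card_onto; rewrite ?card_ord.
exact: focused_monochromatic foc (ltn_ord i) chif.
Qed.

Theorem hales_jewett k r : exists N, hales_jewett_at k r N.
Proof.
elim: k r => [r|k IHk]; last exact: hales_jewett_succ.
by exists 1 => C chi _; apply: monochromatic_line_alphabet1.
Qed.

Section Ultrafilters.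
Import classical_sets.
Local Open Scope classical_set_scope.

Variable S : Type.
Implicit Types (u v w : (S -> Prop) -> Prop) (F : (S -> Prop) -> Prop) (B C : S -> Prop).

Lemma ultrafilterT u : ultrafilter u -> u (fun _ => True).
Proof. by case. Qed.

Lemma ultrafilter_neq0 u : ultrafilter u -> ~ u (fun _ => False).
Proof. by case. Qed.

Lemma ultrafilterS u B C : ultrafilter u -> u B -> (forall x, B x -> C x) -> u C.
Proof. by case=> _ _ uS _ _; apply: uS. Qed.

Lemma ultrafilterI u B C : ultrafilter u -> u B -> u C -> u (fun x => B x /\ C x).
Proof. by case=> _ _ _ uI _; apply: uI. Qed.

Lemma ultrafilterC u B : ultrafilter u -> ~ u B -> u (fun x => ~ B x).
Proof. by case=> _ _ _ _ uC nuB; case: (uC B). Qed.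

Lemma ultrafilter_ex u B : ultrafilter u -> u B -> exists x, B x.
Proof.
move=> uU uB; apply: boolp.contrapT => noB; apply: (ultrafilter_neq0 uU).
by apply: (ultrafilterS uU uB) => x Bx; apply: noB; exists x.
Qed.

Lemma ultrafilterNC u B : ultrafilter u -> u B -> ~ u (fun x => ~ B x).
Proof.
move=> uU uB uNB; apply: (ultrafilter_neq0 uU).
by apply: (ultrafilterS uU (ultrafilterI uU uB uNB)) => x [].
Qed.

Lemma ultrafilter_eq u v : ultrafilter u -> ultrafilter v ->
  (forall B, u B -> v B) -> u = v.
Proof.
move=> uU vU uv; apply: boolp.funext => B; apply: boolp.propext; split; first exact: uv.
move=> vB; apply: boolp.contrapT => /(ultrafilterC uU) /uv; exact: ultrafilterNC.
Qed.

Lemma ultrafilter_forall_seq (I : Type) u (s : seq I) (E : I -> S -> Prop) :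
  ultrafilter u -> (forall i, List.In i s -> u (E i)) ->
  u (fun x => forall i, List.In i s -> E i x).
Proof.
move=> uU; elim: s => [|i s IHs] uE.
  by apply: (ultrafilterS uU (ultrafilterT uU)).
have uEs j : List.In j s -> u (E j) by move=> sj; apply: uE; right.
apply: (ultrafilterS uU (ultrafilterI uU (uE i (or_introl erefl)) (IHs uEs))).
by move=> x [Eix Ex] j /= [<-|/Ex].
Qed.

Lemma In_of_mem (T : eqType) (x : T) (s : seq T) : x \in s -> List.In x s.
Proof. by elim: s => //= y s IHs; rewrite in_cons => /orP[/eqP ->|/IHs]; [left|right]. Qed.

Lemma ultrafilter_forall_fin (I : finType) u (E : I -> S -> Prop) :
  ultrafilter u -> (forall i, u (E i)) -> u (fun x => forall i, E i x).
Proof.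
move=> uU uE; have := ultrafilter_forall_seq uU (fun i (_ : List.In i (enum I)) => uE i).
by move/ultrafilterS; apply=> // x Ex i; apply/Ex/In_of_mem; rewrite mem_enum.
Qed.

Definition fin_inter_prop F := forall l : seq (S -> Prop),
  (forall C, List.In C l -> F C) -> exists x, forall C, List.In C l -> C x.

(* F represents the closed subset {u | F is included in u} of beta S; every
   closed subset of beta S is of this form. *)
Definition ultra_over F u := ultrafilter u /\ forall D, F D -> u D.

Lemma fin_inter_ultra_over F : fin_inter_prop F -> exists u, ultra_over F u.
Proof.
pose gen B := exists l, (forall C, List.In C l -> F C) /\
  forall x, (forall C, List.In C l -> C x) -> B x.
move=> FIP_F; have gen_proper : filter.ProperFilter gen.
  split.
  - by case=> l [Fl sub]; have [x lx] := FIP_F l Fl; exact: sub x lx.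
  - split.
    + by exists [::].
    + move=> B1 B2 [l1 [Fl1 sub1]] [l2 [Fl2 sub2]]; exists (l1 ++ l2); split.
        by move=> C /(List.in_app_or l1 l2 C)[]; [apply: Fl1|apply: Fl2].
      by move=> x lx; split; [apply: sub1|apply: sub2] => C lC; apply: lx;
        apply: List.in_or_app; [left|right].
    + by move=> B1 B2 B12 [l [Fl sub]]; exists l; split => // x /sub /B12.
have [G [UG genG]] := filter.ultraFilterLemma gen_proper.
have FG : filter.Filter G by case: UG => [[]].
exists G; split; last first.
  move=> D FD; apply: genG; exists [:: D].
  by split=> [C [<-|[]]|x /(_ D (or_introl erefl))].
split.
- exact: (@filter.filterT _ G FG).
- by move=> G0; apply: (@filter.filter_not_empty _ G _).
- by move=> B C GB BC; apply: (@filter.filterS _ G FG B C).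
- by move=> B C GB GC; apply: (@filter.filterI _ G FG B C).
- by move=> B; apply: filter.in_ultra_setVsetC.
Qed.

Lemma ultra_overU F G u :
  ultra_over (F `|` G) u <-> ultra_over F u /\ (forall D, G D -> u D).
Proof.
split=> [[uU uFG]|[[uU uF] uG]]; last by split=> // D [/uF|/uG].
by split=> [|D GD]; [split=> // D FD|]; apply: uFG; [left|right].
Qed.

Lemma fin_inter_propU F G : G setT -> (forall E1 E2, G E1 -> G E2 -> G (E1 `&` E2)) ->
  (forall l E, (forall C, List.In C l -> F C) -> G E ->
     exists x, E x /\ forall C, List.In C l -> C x) ->
  fin_inter_prop (F `|` G).
Proof.
move=> GT GI meets l FGl; suff [l' [E [Fl' GE sub]]] : exists l' E,
    [/\ forall C, List.In C l' -> F C, G E &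
        forall x, E x -> (forall C, List.In C l' -> C x) -> forall C, List.In C l -> C x].
  by have [x [Ex l'x]] := meets l' E Fl' GE; exists x; apply: sub.
elim: l FGl => [|D l IHl] FGl; first by exists [::], setT; split.
have [|l' [E [Fl' GE sub]]] := IHl; first by move=> C lC; apply: FGl; right.
have [FD|GD] := FGl D (or_introl erefl).
  exists (D :: l'), E; split=> // [C /= [<-|/Fl']//|x Ex Dl'x C /= [<-|lC]].
    by apply: Dl'x; left.
  by apply: sub lC => // C' l'C'; apply: Dl'x; right.
exists l', (E `&` D); split=> //; first exact: GI.
by move=> x [Ex Dx] l'x C /= [<-//|lC]; apply: sub.
Qed.

End Ultrafilters.

Section UltraAdd.
Import boolp classical_sets.
Local Open Scope classical_set_scope.

Variables (S : Type) (add : S -> S -> S).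
Hypothesis addA : associative add.
Implicit Types (u v w q : set_system S) (F G T : set_system S) (B D E : set S).
Local Notation "u \+ v" := (ultra_add add u v) (at level 50, left associativity).

Lemma ultrafilter_add u v : ultrafilter u -> ultrafilter v -> ultrafilter (u \+ v).
Proof.
move=> uU vU; split.
- by apply: (ultrafilterS uU (ultrafilterT uU)) => x _; apply: ultrafilterT.
- by move=> /(ultrafilter_ex uU)[x /(ultrafilter_neq0 vU)].
- move=> B C uvB BC; apply: (ultrafilterS uU uvB) => x vB.
  by apply: (ultrafilterS vU vB) => y; apply: BC.
- move=> B C uvB uvC; apply: (ultrafilterS uU (ultrafilterI uU uvB uvC)) => x [].
  exact: ultrafilterI.
- move=> B; have [_ _ _ _ uUC] := uU.
  have [uvB|uvNB] := uUC (fun x => v (fun y => B (add x y))); first by left.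
  by right; apply: (ultrafilterS uU uvNB) => x; apply: ultrafilterC.
Qed.

Lemma ultra_addA u v w : u \+ (v \+ w) = (u \+ v) \+ w.
Proof.
rewrite /ultra_add; apply: funext => B; congr u; apply: funext => x.
by congr v; apply: funext => y; congr w; apply: funext => z; rewrite addA.
Qed.

Definition ultra_add_closed F :=
  forall u v, ultra_over F u -> ultra_over F v -> ultra_over F (u \+ v).

Definition closed_subsemigroup F := (exists u, ultra_over F u) /\ ultra_add_closed F.

Lemma closed_subsemigroup_bigcup F (X : set (set_system S)) :
  closed_subsemigroup F -> (forall Y, X Y -> closed_subsemigroup (F `|` Y)) ->
  total_on X subset -> closed_subsemigroup (F `|` \bigcup_(Y in X) Y).
Proof.
move=> [[u0 u0F] addF] cX totX.
have chain_bound l : (forall C, List.In C l -> (F `|` \bigcup_(Y in X) Y) C) ->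
    exists2 Y, Y = set0 \/ X Y & forall C, List.In C l -> (F `|` Y) C.
  elim: l => [_|D l IHl FXl]; first by exists set0; left.
  have [|Y XY lY] := IHl; first by move=> C lC; apply: FXl; right.
  have [FD|[Z XZ ZD]] := FXl D (or_introl erefl).
    by exists Y => // C /= [<-|/lY]; [left|].
  have [Y0|{}XY] := XY; first subst Y.
    by exists Z; [right|move=> C /= [<-|/lY[]//]; [right|left]].
  have [YZ|ZY] := totX _ _ XY XZ.
    by exists Z; [right|move=> C /= [<-|/lY[FC|/YZ]]; [right|left|right]].
  by exists Y; [right|move=> C /= [<-|/lY]; [right; apply: ZY|]].
have restrict Y u :
    X Y -> ultra_over (F `|` \bigcup_(Y in X) Y) u -> ultra_over (F `|` Y) u.
  move=> XY /ultra_overU[uF uX]; apply/ultra_overU; split=> // D YD.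
  by apply: uX; exists Y.
split.
  apply: fin_inter_ultra_over => l /chain_bound[Y XY lY].
  have [u [uU uY]] : exists u, ultra_over (F `|` Y) u.
    case: XY => [->|/cX[]//]; exists u0; apply/ultra_overU; split=> // D [].
  apply: (ultrafilter_ex uU); exact: ultrafilter_forall_seq (fun C lC => uY C (lY C lC)).
move=> u v /[dup] uFX /ultra_overU[uF _] /[dup] vFX /ultra_overU[vF _].
apply/ultra_overU; split; first exact: addF.
move=> D [Y XY YD]; have [_ addY] := cX Y XY.
by apply: (addY u v (restrict Y u XY uFX) (restrict Y v XY vFX)).2; right.
Qed.

Lemma maximal_closed_subsemigroup F : closed_subsemigroup F ->
  exists T, [/\ F `<=` T, closed_subsemigroup T &
                forall G, closed_subsemigroup (T `|` G) -> G `<=` T].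
Proof.
move=> cF.
have [A [cA maxA]] := Zorn_bigcup (P := fun X => closed_subsemigroup (F `|` X))
  (fun X XP totX => closed_subsemigroup_bigcup cF XP totX).
exists (F `|` A); split=> [D FD|//|G cG D GD]; first by left.
apply: contrapT => nD; apply: (maxA (A `|` G)); last by rewrite setUA.
by split=> [D' AD'|/(_ D (or_intror GD))]; [left|move=> AD; apply: nD; right].
Qed.

Definition shift_in q D : set S := fun z => q (fun b => D (add z b)).

(* Right translation by q maps closed subsets of beta S to closed subsets. *)
Lemma ultra_over_add_r T q w : ultrafilter q -> ultrafilter w ->
  (forall D, (forall x, ultra_over T x -> (x \+ q) D) -> w D) ->
  exists2 y, ultra_over T y & w = y \+ q.
Proof.
move=> qU wU wT.
pose G := [set E | exists D, w D /\ shift_in q D `<=` E].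
have [|y /ultra_overU[yT yG]] := @fin_inter_ultra_over _ (T `|` G).
  apply: fin_inter_propU => [|E1 E2 [D1 [wD1 sub1]] [D2 [wD2 sub2]]|l E Tl [D [wD sub]]].
  - by exists (fun _ => True); split=> //; apply: ultrafilterT.
  - exists (fun x => D1 x /\ D2 x); split; first exact: ultrafilterI.
    by move=> z qD12; split; [apply: sub1|apply: sub2];
      apply: (ultrafilterS qU qD12) => b [].
  - have [x xT xD] : exists2 x, ultra_over T x & x (shift_in q D).
      apply: contrapT => nx; apply: (ultrafilterNC wU wD); apply: wT => x xT.
      have nxD : ~ x (shift_in q D) by move=> xD; apply: nx; exists x.
      have [xU _] := xT; apply: (ultrafilterS xU (ultrafilterC xU nxD)) => z.
      exact: ultrafilterC.
    have [xU xTs] := xT.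
    have [z [/sub Ez lz]] := ultrafilter_ex xU (ultrafilterI xU xD
      (ultrafilter_forall_seq xU (fun C lC => xTs C (Tl C lC)))).
    by exists z.
exists y => //; have [yU _] := yT.
apply: ultrafilter_eq; [done | exact: ultrafilter_add | move=> D wD].
by apply: yG; exists D; split.
Qed.

Theorem ellis_numakura F : closed_subsemigroup F ->
  exists q, ultra_over F q /\ ultra_idempotent add q.
Proof.
move=> /maximal_closed_subsemigroup[T [FT [[q qT] addT] maxT]].
have [qU qTs] := qT.
(* T is a minimal closed subsemigroup, so the closed subsemigroups T + q and
   {u over T | u + q = q} are T itself. *)
have q_fixed : exists2 y, ultra_over T y & q = y \+ q.
  pose Tq := [set D | forall x, ultra_over T x -> (x \+ q) D].
  apply: ultra_over_add_r => // D TqD; apply/qTs/(maxT Tq) => //; split.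
    exists (q \+ q); apply/ultra_overU.
    by split=> [|D' /(_ q qT)//]; exact: (addT q q qT qT).
  move=> u v /ultra_overU[uT _] /ultra_overU[vT vqD]; apply/ultra_overU.
  split=> [|D' uvqD]; first exact: (addT u v uT vT).
  have [y yT ->] := ultra_over_add_r qU (proj1 vT) vqD.
  by rewrite ultra_addA; apply: uvqD; exact: (addT u y uT yT).
pose G := [set E | exists D, q D /\ shift_in q D `<=` E].
have stabP u : ultrafilter u -> (forall E, G E -> u E) <-> u \+ q = q.
  move=> uU; split=> [uG|uq E [D [qD sub]]].
    apply/esym/ultrafilter_eq; [done | exact: ultrafilter_add | move=> D qD].
    by apply: uG; exists D; split.
  by rewrite -uq in qD; apply: (ultrafilterS uU qD).
have GT : G `<=` T.
  apply: maxT; split.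
    have [y yT yq] := q_fixed.
    by exists y; apply/ultra_overU; split=> //; apply/stabP; [case: yT|rewrite -yq].
  move=> u v /ultra_overU[uT uG] /ultra_overU[vT vG]; apply/ultra_overU.
  have [uU _] := uT; have [vU _] := vT.
  split; first exact: (addT u v uT vT).
  apply/stabP; first exact: ultrafilter_add.
  by rewrite -ultra_addA (stabP v vU).1 // (stabP u uU).1.
have qq : q \+ q = q by apply/stabP => // E /GT /qTs.
by exists q; split=> [|B]; [split=> // D /FT /qTs|rewrite qq].
Qed.

End UltraAdd.

Lemma big_line_point (R : Type) (idx : R) (op : Monoid.com_law idx) N K
    (lam : {ffun 'I_N -> option 'I_K}) (F : 'I_N -> 'I_K -> R) x y :
  \big[op/idx]_i F i (line_point lam x i) =
  op (\big[op/idx]_(i | lam i != None) F i (line_point lam y i))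
     (\big[op/idx]_(i | lam i == None) F i x).
Proof.
rewrite (bigID (fun i => lam i != None)) /=; congr (op _ _).
  by apply: eq_bigr => i; rewrite !ffunE; case: (lam i).
by apply: eq_big => [i|i]; rewrite ?negbK // => /eqP lamN; rewrite ffunE lamN.
Qed.

Section CRSets.
Variables (S : Type) (add : S -> S -> S).
Implicit Types (B D E : S -> Prop) (u v : (S -> Prop) -> Prop).

Lemma eq_alpha_sum r d (f g : 'I_r -> S) alpha :
  f =1 g -> alpha_sum add d f alpha = alpha_sum add d g alpha.
Proof. by move=> /boolp.funext ->. Qed.

Lemma CR_setS B D : (forall x, B x -> D x) -> CR_set add B -> CR_set add D.
Proof.
move=> BD CRB n; have [r CRr] := CRB n; exists r => M.
by have [al [s [al0 Bs]]] := CRr M; exists al, s; split=> // j; apply: BD.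
Qed.

Lemma CR_set_inhabited B : CR_set add B -> inhabited S.
Proof.
move=> /(_ 0)[r /(_ (fun _ (j : 'I_0) => ltac:(by case: j)))][al [s _]].
by constructor.
Qed.

Lemma CR_set_ex B : CR_set add B -> exists x, B x.
Proof.
move=> CRB; have [s0] := CR_set_inhabited CRB.
have [r CRr] := CRB 1; have [al [s [_ Bs]]] := CRr (fun _ _ => s0).
exact: ex_intro _ _ (Bs ord0).
Qed.

Definition co_CR_set D := ~ CR_set add (fun x => ~ D x).

Lemma ultra_over_co_CR u : ultra_over co_CR_set u -> forall B, u B -> CR_set add B.
Proof.
move=> [uU ucoCR] B uB; apply: boolp.contrapT => nCRB.
apply: (ultrafilterNC uU uB); apply: ucoCR => CRnnB; apply: nCRB.
by apply: CR_setS CRnnB => x; apply: boolp.contrapT.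
Qed.

(* The width n.+1 is positive: width 0 never witnesses failure, S being inhabited. *)
Lemma not_CR_set_bad (s0 : S) B : ~ CR_set add B ->
  exists n, forall r, exists M : 'I_r -> 'I_n.+1 -> S, forall alpha s, alpha != set0 ->
    ~ forall j, B (add s (alpha_sum add s (fun i => M i j) alpha)).
Proof.
move=> nCRB; apply: boolp.contrapT => noBad; apply: nCRB => -[|n].
  exists 1 => M; exists setT, s0; split=> [|[]//].
  by rewrite -cards_eq0 cardsT card_ord.
apply: boolp.contrapT => noR; apply: noBad; exists n => r.
apply: boolp.contrapT => noM; apply: noR; exists r => M.
apply: boolp.contrapT => noAlpha; apply: noM; exists M => al s al0 Bs.
by apply: noAlpha; exists al, s.
Qed.

Section Commutative.
Hypotheses (addA : associative add) (addC : commutative add).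
Local Notation oadd := (oAC addA addC).

Lemma alpha_sumE r d (f : 'I_r -> S) alpha : alpha != set0 ->
  Some (alpha_sum add d f alpha) = \big[oadd/None]_(i in alpha) Some (f i).
Proof.
rewrite -cards_eq0 cardE /alpha_sum -big_enum.
case: (enum alpha) => [//|i t] _; rewrite big_cons.
elim: t (f i) => [|k t IHt] a /=; first by rewrite big_nil.
by rewrite IHt big_cons Monoid.mulmA.
Qed.

Lemma alpha_sum_default r d d' (f : 'I_r -> S) alpha : alpha != set0 ->
  alpha_sum add d f alpha = alpha_sum add d' f alpha.
Proof. by move=> al0; apply: Some_inj; rewrite !alpha_sumE. Qed.

Lemma ultra_add_CR u v : ultrafilter u -> (forall B, u B -> CR_set add B) ->
  ultrafilter v -> forall B, ultra_add add u v B -> CR_set add B.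
Proof.
move=> uU uCR vU B uvB n; have [r CRr] := uCR _ uvB n; exists r => M.
have [al [s [al0 vBs]]] := CRr M.
have [y Bsy] := ultrafilter_ex vU (ultrafilter_forall_fin vU vBs).
exists al, (add s y); split=> // j.
by rewrite -addA [add y _]addC addA (alpha_sum_default _ s _ al0); apply: Bsy.
Qed.

Lemma alpha_sum_morph (c : S -> nat) r d (f : 'I_r -> S) alpha :
  {morph c : x y / add x y >-> (x + y)%N} -> alpha != set0 ->
  c (alpha_sum add d f alpha) = \sum_(i in alpha) c (f i).
Proof.
move=> cD al0; rewrite -[LHS]/(oapp c 0 (Some (alpha_sum add d f alpha))).
rewrite (alpha_sumE _ _ al0).
by apply: (big_morph (oapp c 0)) => // [[x|] [y|]] //=; rewrite ?addn0.
Qed.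

Definition word_matrix r N K (M : 'I_#|{: 'I_r * 'I_N}| -> 'I_K -> S) (d : S) m
    (w : {ffun 'I_N -> 'I_K}) : S :=
  alpha_sum add d (fun i => M (enum_rank (m, i)) (w i)) setT.

(* Along a line, the inactive positions contribute a constant absorbed into s',
   and the active ones give the rows beta = alpha x (active positions). *)
Lemma word_matrix_line r N K (M : 'I_#|{: 'I_r * 'I_N}| -> 'I_K.+1 -> S) d
    (alpha : {set 'I_r}) s (lam : {ffun 'I_N -> option 'I_K.+1}) :
  alpha != set0 -> is_line lam ->
  exists beta s', beta != set0 /\ forall x,
    add s (alpha_sum add s (fun m => word_matrix M d m (line_point lam x)) alpha) =
    add s' (alpha_sum add s' (fun k => M k x) beta).
Proof.
move=> al0 [i0 lami0].
pose rk m i : 'I_#|{: 'I_r * 'I_N}| := enum_rank (m, i).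
pose fixed := \big[oadd/None]_(m in alpha)
  \big[oadd/None]_(i | lam i != None) Some (M (rk m i) (line_point lam ord0 i)).
pose beta := [set rk p.1 p.2 | p in [pred p | (p.1 \in alpha) && (lam p.2 == None)]].
have [m0 al_m0] := set0Pn _ al0.
have beta0 : beta != set0.
  apply/set0Pn; exists (rk m0 i0); apply/imsetP; exists (m0, i0) => //.
  by rewrite inE /= al_m0 lami0 eqxx.
have setT0 : [set: 'I_N] != set0 by apply/set0Pn; exists i0.
exists beta, (odflt s (oadd (Some s) fixed)); split=> // x; apply: Some_inj.
rewrite -!(oACE addA addC) !alpha_sumE // big_imset /=; last first.
  by move=> [? ?] [? ?] _ _ /enum_rank_inj.
have -> : Some (odflt s (oadd (Some s) fixed)) = oadd (Some s) fixed by case: fixed.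
rewrite -Monoid.mulmA; congr (oadd _ _).
transitivity (\big[oadd/None]_(m in alpha) oadd
    (\big[oadd/None]_(i | lam i != None) Some (M (rk m i) (line_point lam ord0 i)))
    (\big[oadd/None]_(i | lam i == None) Some (M (rk m i) x))).
  apply: eq_bigr => m _; rewrite /word_matrix alpha_sumE //.
  rewrite (eq_bigl xpredT) => [|i]; last exact: in_setT.
  exact: (big_line_point _ lam (fun i a => Some (M (rk m i) a))).
rewrite big_split /=; congr (oadd _ _).
by rewrite pair_big; apply: eq_bigl => p; rewrite inE.
Qed.

Lemma CR_setU B1 B2 : CR_set add (fun x => B1 x \/ B2 x) ->
  CR_set add B1 \/ CR_set add B2.
Proof.
(* Put bad matrices M1 for B1 and M2 for B2 side by side and colour words by
   membership in B1; a monochromatic line (Hales-Jewett) makes the columns of M1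
   or of M2 good after all. *)
move=> CRU; have [s0] := CR_set_inhabited CRU.
apply: boolp.contrapT => nCR12.
have [n1 bad1] := not_CR_set_bad s0 (fun CR1 => nCR12 (or_introl CR1)).
have [n2 bad2] := not_CR_set_bad s0 (fun CR2 => nCR12 (or_intror CR2)).
have [N HJN] := hales_jewett (n1 + n2.+1) 2.
have [r CRr] := CRU #|{: {ffun 'I_N -> 'I_(n1.+1 + n2.+1)}}|.
have [M1 bad1M] := bad1 #|{: 'I_r * 'I_N}|.
have [M2 bad2M] := bad2 #|{: 'I_r * 'I_N}|.
pose M k x := match split x with inl j => M1 k j | inr j => M2 k j end.
have colL j : (fun k => M k (lshift n2.+1 j)) =1 (fun k => M1 k j).
  by move=> k; rewrite /M (unsplitK (inl j)).
have colR j : (fun k => M k (rshift n1.+1 j)) =1 (fun k => M2 k j).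
  by move=> k; rewrite /M (unsplitK (inr j)).
have [al [s [al0 alP]]] := CRr (fun m c => word_matrix M s0 m (enum_val c)).
pose P w := add s (alpha_sum add s (fun m => word_matrix M s0 m w) al).
have {}alP w : B1 (P w) \/ B2 (P w) by move: (alP (enum_rank w)); rewrite enum_rankK.
have [lam lam_line mono] := HJN _ (fun w => boolp.asbool (B1 (P w))) (eq_leq card_bool).
have [beta [s' [beta0 lineP]]] := word_matrix_line M s0 s al0 lam_line.
have [B1P|nB1P] := boolp.pselect (B1 (P (line_point lam ord0))).
  apply: (bad1M beta s' beta0) => j; rewrite -(eq_alpha_sum _ _ (colL j)) -lineP.
  by apply/boolp.asboolP; rewrite (mono _ ord0); apply/boolp.asboolP.
apply: (bad2M beta s' beta0) => j; rewrite -(eq_alpha_sum _ _ (colR j)) -lineP.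
have [B1Pj|B2Pj] := alP (line_point lam (rshift n1.+1 j)); last exact: B2Pj.
exfalso; apply: nB1P; apply/boolp.asboolP.
by rewrite (mono ord0 (rshift n1.+1 j)); apply/boolp.asboolP.
Qed.

Lemma CR_set_meets E l : CR_set add E ->
  (forall D, List.In D l -> co_CR_set D) ->
  exists x, E x /\ forall D, List.In D l -> D x.
Proof.
elim: l E => [|D l IHl] E CRE coCRl.
  by have [x Ex] := CR_set_ex CRE; exists x.
have : CR_set add (fun x => (E x /\ D x) \/ (E x /\ ~ D x)).
  by apply: CR_setS CRE => x Ex; case: (boolp.pselect (D x)); [left|right].
case/CR_setU => [CRED|CREnD].
  have [|x [[Ex Dx] lx]] := IHl _ CRED; first by move=> D' lD'; apply: coCRl; right.
  by exists x; split=> // D' /= [<-|/lx].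
by case: (coCRl D (or_introl erefl)); apply: CR_setS CREnD => x [].
Qed.

Lemma co_CR_ultra_add u v : ultra_over co_CR_set u -> ultrafilter v ->
  ultra_over co_CR_set (ultra_add add u v).
Proof.
move=> /[dup] uco [uU _] vU; have uvU := ultrafilter_add add uU vU.
split=> // D coCR_D; apply: boolp.contrapT => nD; apply: coCR_D.
exact: (ultra_add_CR uU (ultra_over_co_CR uco) vU (ultrafilterC uvU nD)).
Qed.

End Commutative.
End CRSets.

Lemma pos_pair_addA : associative pos_pair_add.
Proof. by move=> x y z; rewrite /pos_pair_add /= !Pos.add_assoc. Qed.

Lemma pos_pair_addC : commutative pos_pair_add.
Proof. by move=> x y; rewrite /pos_pair_add Pos.add_comm [(x.2 + _)%positive]Pos.add_comm. Qed.

Definition ap_set (l : positive) (B : positive -> Prop) (ab : positive * positive) : Prop :=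
  B ab.1 /\ forall i : positive, (i <= l)%positive -> B (ab.1 + i * ab.2)%positive.

Lemma ap_set_CR l B : CR_set Pos.add B -> CR_set pos_pair_add (ap_set l B).
Proof.
move=> CRB n.
pose K := ('I_n * 'I_(Pos.to_nat l).+1)%type.
have [r CRr] := CRB #|{: K}|; exists r => M.
pose c1 i j := Pos.to_nat (M i j).1; pose c2 i j := Pos.to_nat (M i j).2.
(* Column (j, t) is M_j1 + t (M_j2 + 1); the extra t is paid for by the second
   coordinate #|alpha| of the translate. *)
pose col i (jt : K) := Pos.of_nat (c1 i jt.1 + jt.2 * (c2 i jt.1).+1).
have [al [s [al0 Bs]]] := CRr (fun i c => col i (enum_val c)).
exists al, (s, Pos.of_nat #|al|); split=> // j.
set X := pos_pair_add _ _.
have X1 : Pos.to_nat X.1 = Pos.to_nat s + \sum_(i in al) c1 i j.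
  rewrite /= Pos2Nat.inj_add.
  rewrite (alpha_sum_morph pos_pair_addA pos_pair_addC (c := fun x => Pos.to_nat x.1)) //.
  by move=> x y; apply: Pos2Nat.inj_add.
have X2 : Pos.to_nat X.2 = #|al| + \sum_(i in al) c2 i j.
  rewrite /= Pos2Nat.inj_add Nat2Pos.id => [|/eqP]; last by rewrite cards_eq0 (negbTE al0).
  rewrite (alpha_sum_morph pos_pair_addA pos_pair_addC (c := fun x => Pos.to_nat x.2)) //.
  by move=> x y; apply: Pos2Nat.inj_add.
have BX (t : 'I_(Pos.to_nat l).+1) : B (Pos.of_nat (Pos.to_nat X.1 + t * Pos.to_nat X.2)).
  have := Bs (enum_rank (j, t)); rewrite enum_rankK; congr B; apply: Pos2Nat.inj.
  rewrite Pos2Nat.inj_add (alpha_sum_morph Pos.add_assoc Pos.add_comm (c := Pos.to_nat)) //.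
  rewrite Nat2Pos.id; last by have := Pos2Nat.is_pos X.1; lia.
  rewrite X1 X2 (eq_bigr (fun i => c1 i j + t * (c2 i j).+1)); last first.
    move=> i _; rewrite Nat2Pos.id //; have := Pos2Nat.is_pos (M i j).1; rewrite /c1; lia.
  have -> : \sum_(i in al) (c1 i j + t * (c2 i j).+1) =
      \sum_(i in al) c1 i j + t * (#|al| + \sum_(i in al) c2 i j).
    rewrite big_split /= -big_distrr /=; congr (_ + _ * _).
    by rewrite -sum1_card -big_split; apply: eq_bigr.
  lia.
by move=> x y; apply: Pos2Nat.inj_add.
split.
  by have := BX ord0; rewrite mul0n addn0 Pos2Nat.id.
move=> i il; have lt_iL : Pos.to_nat i < (Pos.to_nat l).+1 by apply/ltP; lia.
have e : Pos.to_nat X.1 + Pos.to_nat i * Pos.to_nat X.2 = Pos.to_nat (X.1 + i * X.2).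
  by lia.
by have := BX (Ordinal lt_iL); rewrite (_ : nat_of_ord _ = Pos.to_nat i) // e Pos2Nat.id.
Qed.

Lemma ultrafilter_forall_le (S : Type) (u : (S -> Prop) -> Prop) l
    (E : positive -> S -> Prop) :
  ultrafilter u -> (forall i, (i <= l)%positive -> u (E i)) ->
  u (fun x => forall i, (i <= l)%positive -> E i x).
Proof.
move=> uU; elim/Pos.peano_ind: l => [|l IHl] uE.
  apply: (ultrafilterS uU (uE 1%positive (Pos.le_refl _))) => x E1x i i1.
  by have -> : i = 1%positive by lia.
have uEl : forall i, (i <= l)%positive -> u (E i) by move=> i il; apply: uE; lia.
apply: (ultrafilterS uU (ultrafilterI uU (IHl uEl) (uE _ (Pos.le_refl (Pos.succ l))))).
move=> x [Ex ESx] i iSl; have [->|il] : i = Pos.succ l \/ (i <= l)%positive by lia.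
  exact: ESx.
exact: Ex.
Qed.

Definition ap_filter (p : (positive -> Prop) -> Prop) l (D : positive * positive -> Prop) :=
  exists2 B, p B & forall x, ap_set l B x -> D x.

(* B1 = {a in B | -a + B in p} is in p as p + p = p; this is what lets the
   summand (c, e) from v be chosen after the summand (a, d) from u. *)
Lemma ap_filter_ultra_add p l u v : ultrafilter p -> ultra_idempotent Pos.add p ->
  ultra_over (ap_filter p l) u -> ultra_over (ap_filter p l) v ->
  forall D, ap_filter p l D -> ultra_add pos_pair_add u v D.
Proof.
move=> pU p_idem [uU uAP] [vU vAP] D [B pB sub].
pose B1 a := B a /\ p (fun y => B (a + y)%positive).
have pB1 : p B1 by apply: ultrafilterI => //; apply/p_idem.
apply: (ultrafilterS uU (uAP _ (ex_intro2 _ _ B1 pB1 (fun x h => h)))).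
move=> -[a d] [[Ba pBa] B1ad].
pose B2 y := B y /\ B (a + y)%positive /\
  forall i, (i <= l)%positive -> B (a + i * d + y)%positive.
have pB2 : p B2.
  apply: ultrafilterI => //; apply: ultrafilterI => //.
  apply: (ultrafilter_forall_le (E := fun i y => B (a + i * d + y)%positive)) => //.
  by move=> i /B1ad[].
apply: (ultrafilterS vU (vAP _ (ex_intro2 _ _ B2 pB2 (fun x h => h)))).
move=> -[c e] [[_ [Bac _]] B2ce].
apply: sub; split=> //= i il.
have -> : (a + c + i * (d + e))%positive = (a + i * d + (c + i * e))%positive by lia.
by have [_ [_]] := B2ce i il; apply.
Qed.

Lemma ap_closed_subsemigroup p l : ultrafilter p -> ultra_idempotent Pos.add p ->
  (forall B, p B -> CR_set Pos.add B) ->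
  closed_subsemigroup pos_pair_add
    (classical_sets.setU (co_CR_set pos_pair_add) (ap_filter p l)).
Proof.
move=> pU p_idem pCR; split.
  apply: fin_inter_ultra_over; apply: fin_inter_propU.
  - by exists (fun _ => True) => //; apply: ultrafilterT.
  - move=> E1 E2 [B1 pB1 sub1] [B2 pB2 sub2].
    exists (fun x => B1 x /\ B2 x); first exact: ultrafilterI.
    move=> x [[B1x B2x] ap12]; split; [apply: sub1|apply: sub2];
      by split=> // i /ap12[].
  - move=> L E coL [B pB sub].
    have [x [apx Lx]] :=
      CR_set_meets pos_pair_addA pos_pair_addC (ap_set_CR l (pCR B pB)) coL.
    by exists x; split=> //; apply: sub.
move=> u v /ultra_overU[uco uAP] /ultra_overU[vco vAP]; apply/ultra_overU; split.
  exact: (co_CR_ultra_add pos_pair_addA pos_pair_addC uco (proj1 vco)).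
exact: (ap_filter_ultra_add pU p_idem (conj (proj1 uco) uAP) (conj (proj1 vco) vAP)).
Qed.

Theorem theorem9 (A : positive -> Prop) (l : positive) :
  essential_CR_set Pos.add A ->
  essential_CR_set pos_pair_add
    (fun ab : positive * positive =>
       A ab.1 /\
       forall i : positive, (i <= l)%positive -> A (ab.1 + i * ab.2)%positive).
Proof.
move=> [p [[pU pCR] p_idem pA]].
have [q [[qU qF] q_idem]] :=
  ellis_numakura pos_pair_addA (ap_closed_subsemigroup l pU p_idem pCR).
exists q; split=> //; last by apply: qF; right; exists A.
split=> //; apply: ultra_over_co_CR; split=> // D coD.
by apply: qF; left.
Qed.
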